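(* Let $P_{XY}$ be a probability distribution on $\mathcal X\times\mathcal Y$ and $P'_{X'Y'}$ one on $\mathcal X'\times\mathcal Y'$ (finite sets), and let $(X,X')$ and $(Y,Y')$ be jointly distributed according to $P_{XY}\times P'_{X'Y'}$. Then $U(XX';YY')=U(X;Y)+U(X';Y')$.
   Context: $D(P\|Q)=\sum P\log(P/Q)$ ($0\log(0/q)=0$; $+\infty$ if $P\not\ll Q$). For a joint distribution $P_{AB}$ with $A$-marginal $P_A$, $U(A;B)=\min_{Q_B}D(P_A\times Q_B\|P_{AB})$; here $U(XX';YY')$ means this quantity with $A=(X,X')$, $B=(Y,Y')$. *)

From HB Require Import structures.
From mathcomp Require Import all_boot all_order all_algebra.
From mathcomp Require Import all_classical all_reals.
From mathcomp Require Import ereal exp.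
Set Implicit Arguments. Unset Strict Implicit. Unset Printing Implicit Defensive.
Import Order.TTheory GRing.Theory Num.Theory.
Local Open Scope classical_set_scope.
Local Open Scope ring_scope.

Definition is_dist (R : realType) (T : finType) (p : T -> R) : Prop :=
  (forall t, 0 <= p t) /\ \sum_(t : T) p t = 1.

Definition KL (R : realType) (T : finType) (P Q : T -> R) : \bar R :=
  if [exists t, (P t != 0) && (Q t == 0)] then +oo%E
  else (\sum_(t : T) (if P t == 0 then 0 else P t * ln (P t / Q t)))%:E.

Definition margA (R : realType) (A B : finType) (P : A * B -> R) : A -> R :=
  fun a => \sum_(b : B) P (a, b).

Definition prodD (R : realType) (A B : finType) (PA : A -> R) (QB : B -> R) : A * B -> R :=
  fun ab => PA ab.1 * QB ab.2.

(* U(A;B) = min over Q_B of D(P_A x Q_B || P_AB) (written as an infimum over the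
   probability simplex on B; the infimum is attained). *)
Definition Ufun (R : realType) (A B : finType) (P : A * B -> R) : \bar R :=
  ereal_inf [set KL (prodD (margA P) Q) P | Q in [set Q : B -> R | is_dist Q]].

Definition pairJoint (R : realType) (X Y X' Y' : finType)
  (P : X * Y -> R) (P' : X' * Y' -> R) : (X * X') * (Y * Y') -> R :=
  fun z => P (z.1.1, z.2.1) * P' (z.1.2, z.2.2).

From HB Require Import structures.
From mathcomp Require Import all_boot all_order all_algebra.
From mathcomp Require Import all_classical all_reals.
From mathcomp Require Import ereal exp.
From mathcomp Require Import ring lra.
Set Implicit Arguments. Unset Strict Implicit. Unset Printing Implicit Defensive.
Import Order.TTheory GRing.Theory Num.Theory.
Local Open Scope ring_scope.

(* If the reference measure is a product Q x Q', the divergence of a product is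
   the sum of the divergences, so taking Q_{YY'} = Q_Y x Q_{Y'} gives
   U(XX';YY') <= U(X;Y) + U(X';Y').  Conversely, for any F on A * B,
   D(F || G1 x G2) = D(F_A || G1) + D(F_B || G2) + D(F || F_A x F_B), and the last
   term is a mutual information, hence nonnegative by Gibbs' inequality; applied
   to the joint distribution built from an arbitrary Q_{YY'}, its two marginal
   divergences are admissible values for U(X;Y) and U(X';Y'). *)

Section KL_divergence.
Variable R : realType.

Lemma ln_le_subr1 (z : R) : 0 < z -> ln z <= z - 1.
Proof. by move=> z0; have := @le_ln1Dx R (z - 1); rewrite addrCA subrr addr0; apply; lra. Qed.

Lemma sub_le_mul_ln_div (a b : R) : 0 < a -> 0 < b -> a - b <= a * ln (a / b).
Proof.
move=> a0 b0; rewrite -[a / b]invf_div lnV ?posrE ?divr_gt0 // mulrN.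
have := ler_wpM2l (ltW a0) (ln_le_subr1 (divr_gt0 b0 a0)).
by rewrite mulrBr mulr1 mulrCA divff ?gt_eqF // mulr1; lra.
Qed.

Lemma sum_mul_ln_div_ge0 (T : finType) (f g : T -> R) :
  (forall t, 0 <= f t) -> (forall t, 0 <= g t) ->
  (forall t, f t != 0 -> g t != 0) -> \sum_t g t <= \sum_t f t ->
  0 <= \sum_t f t * ln (f t / g t).
Proof.
move=> f0 g0 fg sum_le; apply: le_trans (_ : \sum_t (f t - g t) <= _).
  by rewrite sumrB subr_ge0.
apply: ler_sum => t _; have [->|ft] := eqVneq (f t) 0; first by rewrite mul0r sub0r oppr_le0.
by apply: sub_le_mul_ln_div; rewrite lt0r ?ft ?(fg _ ft) ?f0 ?g0.
Qed.

Variant KL_spec (T : finType) (f g : T -> R) : \bar R -> Prop :=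
  | KLInfty t of f t != 0 & g t = 0 : KL_spec f g +oo
  | KLFinite of (forall t, f t != 0 -> g t != 0) :
      KL_spec f g (\sum_t f t * ln (f t / g t))%:E.

Lemma KLP (T : finType) (f g : T -> R) : KL_spec f g (KL f g).
Proof.
rewrite /KL; case: existsP => [[t /andP[ft /eqP gt]]|ac]; first exact: KLInfty ft gt.
rewrite (eq_bigr (fun t => f t * ln (f t / g t))) => [|t _].
  by apply: KLFinite => t ft; apply/negP => /eqP gt; apply: ac; exists t; rewrite ft gt eqxx.
by case: eqP => [->|]; rewrite ?mul0r.
Qed.

Lemma KL_finE (T : finType) (f g : T -> R) : (forall t, f t != 0 -> g t != 0) ->
  KL f g = (\sum_t f t * ln (f t / g t))%:E.
Proof. by case: KLP => // t ft gt /(_ t ft); rewrite gt eqxx. Qed.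

Lemma KL_pinfty (T : finType) (f g : T -> R) t : f t != 0 -> g t = 0 -> KL f g = +oo%E.
Proof. by move=> ft gt; case: KLP => // /(_ t ft); rewrite gt eqxx. Qed.

Lemma KL_neqNy (T : finType) (f g : T -> R) : KL f g != -oo%E.
Proof. by case: KLP. Qed.

Lemma KL_ge0 (T : finType) (f g : T -> R) : is_dist f -> is_dist g -> (0 <= KL f g)%E.
Proof.
move=> [f0 f1] [g0 g1]; case: KLP => // ac.
by rewrite lee_fin sum_mul_ln_div_ge0 // f1 g1.
Qed.

Lemma KL_reindex (A B : finType) (h : A -> B) (f g : B -> R) : bijective h ->
  KL (f \o h) (g \o h) = KL f g.
Proof.
move=> hbij; have [h' _ h'K] := hbij.
case: (KLP f g) => [t ft gt|ac].
  by apply: (KL_pinfty (t := h' t)); rewrite /= h'K.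
by rewrite KL_finE => [|a]; [rewrite (reindex h) //; apply: onW_bij | exact: ac].
Qed.

Lemma sumr_pair (I J : finType) (F : I * J -> R) :
  \sum_p F p = \sum_i \sum_j F (i, j).
Proof. by rewrite pair_bigA; apply: eq_bigr => -[]. Qed.

Definition margB (A B : finType) (P : A * B -> R) : B -> R :=
  fun b => \sum_(a : A) P (a, b).

Lemma sum_margA (A B : finType) (P : A * B -> R) : \sum_a margA P a = \sum_t P t.
Proof. by rewrite sumr_pair. Qed.

Lemma sum_margB (A B : finType) (P : A * B -> R) : \sum_b margB P b = \sum_t P t.
Proof. by rewrite sumr_pair exchange_big. Qed.

Lemma sum_prodD (A B : finType) (f : A -> R) (g : B -> R) :
  \sum_t prodD f g t = (\sum_a f a) * (\sum_b g b).
Proof. by rewrite sumr_pair big_distrlr. Qed.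

Lemma dist_margA (A B : finType) (P : A * B -> R) : is_dist P -> is_dist (margA P).
Proof. by case=> P0 P1; split=> [a|]; [exact: sumr_ge0 | rewrite sum_margA]. Qed.

Lemma dist_margB (A B : finType) (P : A * B -> R) : is_dist P -> is_dist (margB P).
Proof. by case=> P0 P1; split=> [b|]; [exact: sumr_ge0 | rewrite sum_margB]. Qed.

Lemma dist_prodD (A B : finType) (f : A -> R) (g : B -> R) :
  is_dist f -> is_dist g -> is_dist (prodD f g).
Proof.
by move=> [f0 f1] [g0 g1]; split=> [t|]; [exact: mulr_ge0 | rewrite sum_prodD f1 g1 mulr1].
Qed.

Lemma dist_neq0 (T : finType) (f : T -> R) : is_dist f -> exists t, f t != 0.
Proof.
move=> [f0 f1]; have /eqP : \sum_t f t != 0 by rewrite f1 oner_eq0.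
by move=> /(psumr_neq0P (fun t _ => f0 t)) [t /andP[_ ft]]; exists t; rewrite gt_eqF.
Qed.

Lemma mul_ln_divMM (a a' b b' : R) : 0 <= a -> 0 <= a' -> 0 <= b -> 0 <= b' ->
  (a != 0 -> b != 0) -> (a' != 0 -> b' != 0) ->
  a * a' * ln (a * a' / (b * b')) = a * ln (a / b) * a' + a * (a' * ln (a' / b')).
Proof.
move=> a0 a'0 b0 b'0 ab a'b'.
have [->|an0] := eqVneq a 0; first by rewrite !mul0r add0r.
have [->|a'n0] := eqVneq a' 0; first by rewrite !(mulr0, mul0r) addr0.
have [ap a'p] : 0 < a /\ 0 < a' by rewrite !lt0r an0 a'n0.
have [bp b'p] : 0 < b /\ 0 < b' by rewrite !lt0r ab ?a'b'.
by rewrite invfM mulrACA [ln (_ / _ * _)]lnM ?posrE ?divr_gt0 //; ring.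
Qed.

Lemma KL_prodD (A B : finType) (f g : A -> R) (f' g' : B -> R) :
  is_dist f -> is_dist f' -> (forall a, 0 <= g a) -> (forall b, 0 <= g' b) ->
  KL (prodD f f') (prodD g g') = (KL f g + KL f' g')%E.
Proof.
move=> df df' g0 g'0; have [[f0 f1] [f'0 f'1]] := (df, df').
case: (KLP f g) => [a fa ga|ac].
  have [b fb] := dist_neq0 df'.
  by rewrite addye ?KL_neqNy // (KL_pinfty (t := (a, b))) /prodD /= ?mulf_neq0 // ga mul0r.
case: (KLP f' g') => [b fb gb|ac'].
  have [a fa] := dist_neq0 df.
  by rewrite addey // (KL_pinfty (t := (a, b))) /prodD /= ?mulf_neq0 // gb mulr0.
rewrite KL_finE => [|[a b]]; last first.
  by rewrite /prodD /= !mulf_eq0 !negb_or => /andP[/ac -> /ac' ->].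
rewrite -EFinD sumr_pair /prodD /=; congr (_%:E).
rewrite (eq_bigr _ (fun a _ => eq_bigr _ (fun b _ =>
  mul_ln_divMM (f0 a) (f'0 b) (g0 a) (g'0 b) (ac a) (ac' b)))).
under eq_bigr do rewrite big_split /=.
by rewrite big_split /= -!big_distrlr /= f1 f'1 mulr1 mul1r.
Qed.

Lemma ln_div_chain (z u v g h : R) : 0 < z -> 0 < u -> 0 < v -> 0 < g -> 0 < h ->
  ln (z / (g * h)) = ln (u / g) + ln (v / h) + ln (z / (u * v)).
Proof. by move=> *; rewrite !ln_div ?posrE ?mulr_gt0 // !lnM ?posrE //; ring. Qed.

Lemma KL_margA_margB_le (A B : finType) (F : A * B -> R) (G1 : A -> R) (G2 : B -> R) :
  is_dist F -> (forall a, 0 <= G1 a) -> (forall b, 0 <= G2 b) ->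
  (KL (margA F) G1 + KL (margB F) G2 <= KL F (prodD G1 G2))%E.
Proof.
move=> [F0 F1] G10 G20; case: (KLP F) => [t _ _|ac]; first exact: leey.
have G12 a b : F (a, b) != 0 -> G1 a != 0 /\ G2 b != 0.
  by move/ac; rewrite /prodD mulf_eq0 negb_or => /andP[].
have FA a b : F (a, b) != 0 -> margA F a != 0.
  by apply: contra_neq => /(psumr_eq0P (fun b _ => F0 (a, b)))/(_ b isT).
have FB a b : F (a, b) != 0 -> margB F b != 0.
  by apply: contra_neq => /(psumr_eq0P (fun a _ => F0 (a, b)))/(_ a isT).
have acA a : margA F a != 0 -> G1 a != 0.
  by move=> /eqP/(psumr_neq0P (fun b _ => F0 (a, b)))[b /andP[_ /lt0r_neq0/G12[]]].
have acB b : margB F b != 0 -> G2 b != 0.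
  by move=> /eqP/(psumr_neq0P (fun a _ => F0 (a, b)))[a /andP[_ /lt0r_neq0/G12[]]].
rewrite !KL_finE // -EFinD lee_fin.
have chain t : F t * ln (F t / prodD G1 G2 t) =
    F t * ln (margA F t.1 / G1 t.1) + F t * ln (margB F t.2 / G2 t.2)
    + F t * ln (F t / prodD (margA F) (margB F) t).
  case: t => a b; have [->|Fab] := eqVneq (F (a, b)) 0; first by rewrite !mul0r !addr0.
  have [G1a G2b] := G12 _ _ Fab.
  by rewrite /prodD /= (@ln_div_chain _ (margA F a) (margB F b)) ?lt0r ?Fab
    ?(FA _ _ Fab) ?(FB _ _ Fab) ?G1a ?G2b ?F0 ?G10 ?G20 ?sumr_ge0 //; ring.
rewrite (eq_bigr _ (fun t _ => chain t)) !big_split /=.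
have -> : \sum_t F t * ln (margA F t.1 / G1 t.1) = \sum_a margA F a * ln (margA F a / G1 a).
  by rewrite sumr_pair; apply: eq_bigr => a _; rewrite mulr_suml.
have -> : \sum_t F t * ln (margB F t.2 / G2 t.2) = \sum_b margB F b * ln (margB F b / G2 b).
  by rewrite sumr_pair exchange_big; apply: eq_bigr => b _; rewrite mulr_suml.
rewrite lerDl sum_mul_ln_div_ge0 //.
- by move=> [a b]; apply: mulr_ge0; apply: sumr_ge0.
- by move=> [a b] Fab; apply: mulf_neq0; [exact: FA Fab | exact: FB Fab].
- by rewrite sum_prodD sum_margA sum_margB F1 mulr1.
Qed.

End KL_divergence.

Section ereal_inf_add.
Variable R : realType.
Local Open Scope ereal_scope.

Lemma ereal_inf_ge0 (I : Type) (A : set I) (f : I -> \bar R) :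
  (forall i, A i -> 0 <= f i) -> 0 <= ereal_inf (f @` A).
Proof. by move=> f0; apply/ereal_infP => _ [i Ai <-]; exact: f0. Qed.

Lemma le_adde_ereal_inf (I : Type) (A : set I) (f : I -> \bar R) (c x : \bar R) :
  0 <= x -> (forall i, A i -> 0 <= f i) -> (forall i, A i -> c <= x + f i) ->
  c <= x + ereal_inf (f @` A).
Proof.
case: x => [r| |] // _ f0 cf.
  rewrite -leeBlDl //; apply/ereal_infP => _ [i Ai <-].
  by rewrite leeBlDl //; exact: cf.
by rewrite addye ?leey // gt_eqF // (lt_le_trans ltNy0 (ereal_inf_ge0 f0)).
Qed.

Lemma le_ereal_infD (I J : Type) (A : set I) (B : set J)
    (f : I -> \bar R) (g : J -> \bar R) (c : \bar R) :
  (forall i, A i -> 0 <= f i) -> (forall j, B j -> 0 <= g j) ->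
  (forall i j, A i -> B j -> c <= f i + g j) ->
  c <= ereal_inf (f @` A) + ereal_inf (g @` B).
Proof.
move=> f0 g0 cfg; rewrite addeC; apply: (le_adde_ereal_inf (ereal_inf_ge0 g0) f0).
move=> i Ai; rewrite addeC; apply: (le_adde_ereal_inf (f0 i Ai) g0).
by move=> j Bj; exact: cfg.
Qed.

End ereal_inf_add.

Section pairJoint.
Variables (R : realType) (X Y X' Y' : finType).
Variables (P : X * Y -> R) (P' : X' * Y' -> R).
Hypotheses (dP : is_dist P) (dP' : is_dist P').
Local Notation PP' := (pairJoint P P').

Definition pair_shuffle (z : (X * Y) * (X' * Y')) : (X * X') * (Y * Y') :=
  ((z.1.1, z.2.1), (z.1.2, z.2.2)).

Lemma pair_shuffle_bij : bijective pair_shuffle.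
Proof. by exists (fun z => ((z.1.1, z.2.1), (z.1.2, z.2.2))) => -[[? ?] [? ?]]. Qed.

Lemma margA_pairJoint : margA PP' = prodD (margA P) (margA P').
Proof. by apply/funext => -[x x']; rewrite /margA /pairJoint /prodD /= big_distrlr pair_bigA. Qed.

Lemma KL_pairJoint (Q : Y * Y' -> R) :
  KL (prodD (margA PP') Q) PP' = KL (prodD (margA PP') Q \o pair_shuffle) (prodD P P').
Proof. by rewrite -(KL_reindex _ _ pair_shuffle_bij); congr KL; apply/funext => -[[? ?] [? ?]]. Qed.

Lemma KL_pairJoint_prodD (Q : Y -> R) (Q' : Y' -> R) : is_dist Q -> is_dist Q' ->
  KL (prodD (margA PP') (prodD Q Q')) PP' =
  (KL (prodD (margA P) Q) P + KL (prodD (margA P') Q') P')%E.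
Proof.
move=> dQ dQ'; rewrite KL_pairJoint -KL_prodD; last 4 first.
- exact: dist_prodD (dist_margA dP) dQ.
- exact: dist_prodD (dist_margA dP') dQ'.
- exact: dP.1.
- exact: dP'.1.
congr KL; apply/funext => -[[x y] [x' y']].
by rewrite margA_pairJoint /prodD /= mulrACA.
Qed.

Lemma KL_pairJoint_ge (Q : Y * Y' -> R) : is_dist Q ->
  (KL (prodD (margA P) (margA Q)) P + KL (prodD (margA P') (margB Q)) P'
    <= KL (prodD (margA PP') Q) PP')%E.
Proof.
move=> [Q0 Q1]; rewrite KL_pairJoint margA_pairJoint; set F := _ \o _.
have FA : margA F = prodD (margA P) (margA Q).
  apply/funext => -[x y]; rewrite /F /margA sumr_pair /prodD /=.
  by rewrite -big_distrlr /= -mulr_sumr sum_margA dP'.2 mulr1.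
have FB : margB F = prodD (margA P') (margB Q).
  apply/funext => -[x' y']; rewrite /F /margB sumr_pair /prodD /=.
  by rewrite -big_distrlr /= -mulr_suml sum_margA dP.2 mul1r.
have dF : is_dist F.
  split=> [[[x y] [x' y']]|]; last by rewrite -sum_margA FA sum_prodD !sum_margA dP.2 Q1 mulr1.
  by apply: mulr_ge0 => //; apply: mulr_ge0; apply: sumr_ge0 => *; [exact: dP.1 | exact: dP'.1].
by rewrite -FA -FB; apply: KL_margA_margB_le dF dP.1 dP'.1.
Qed.

End pairJoint.

Theorem mainTheorem9 (R : realType) (X Y X' Y' : finType)
  (P : X * Y -> R) (P' : X' * Y' -> R) :
  is_dist P -> is_dist P' ->
  Ufun (pairJoint P P') = (Ufun P + Ufun P')%E.
Proof.
move=> dP dP'; apply/eqP; rewrite eq_le; apply/andP; split.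
  apply: le_ereal_infD => [Q dQ|Q' dQ'|Q Q' dQ dQ'].
  - exact: KL_ge0 (dist_prodD (dist_margA dP) dQ) dP.
  - exact: KL_ge0 (dist_prodD (dist_margA dP') dQ') dP'.
  rewrite -KL_pairJoint_prodD //; apply: ereal_inf_lbound.
  by exists (prodD Q Q') => //; exact: dist_prodD.
apply/ereal_infP => _ [Q dQ <-]; apply: le_trans (KL_pairJoint_ge dP dP' dQ).
apply: leeD; apply: ereal_inf_lbound.
  by exists (margA Q) => //; exact: dist_margA.
by exists (margB Q) => //; exact: dist_margB.
Qed.
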